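(* Let $\mu,\nu$ be Radon measures on $\mathbb{R}$ and $I\subset\mathbb{R}$ an interval. Then $\alpha_{s,\mu,\nu}(I)\le 2$, and, whenever $\nu(I)>0$ and $\int\varphi\,d\nu_I>0$, $$\alpha_{s,\mu,\nu}(I)\le\frac{2\alpha_{\mu,\nu}(I)}{\int\varphi\,d\nu_I}.$$ Moreover, if $\nu$ is globally doubling with constant $D$ ($\nu(B(x,2r))\le D\nu(B(x,r))$ for all $x,r$), and $I\subset J\subset\mathbb{R}$ are intervals with $|I|\ge\theta|J|$ for some $\theta>0$, then $\alpha_{s,\mu,\nu}(I)\le C\,\alpha_{s,\mu,\nu}(J)$ for a constant $C$ depending only on $D$ and $\theta$.
   Context: Wasserstein distance: $\mathbb{W}_1(\nu_1,\nu_2) := \sup_\psi |\int\psi\,d\nu_1 - \int\psi\,d\nu_2|$ over all $1$-Lipschitz $\psi\colon\mathbb{R}\to\mathbb{R}$ supported on $[0,1]$. For an interval $I$, $T_I$ is the increasing affine map taking $\overline I$ onto $[0,1]$; $\mu_I := T_{I\sharp}(\mu|_I)/\mu(I)$, $\nu_I := T_{I\sharp}(\nu|_I)/\nu(I)$ (zero if the mass vanishes), $\alpha_{\mu,\nu}(I) := \mathbb{W}_1(\mu_I,\nu_I)$. Let $\varphi(x) := \operatorname{dist}(x,\mathbb{R}\setminus(0,1))$, $\varphi_I := \varphi\circ T_I$. Smooth $\alpha$-numbers: $\alpha_{s,\mu,\nu}(I) := \mathbb{W}_1(\mu_{\varphi,I},\nu_{\varphi,I})$, where $\mu_{\varphi,I}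 := T_{I\sharp}(\mu|_I)/\int\varphi_I\,d\mu$ and $\nu_{\varphi,I} := T_{I\sharp}(\nu|_I)/\int\varphi_I\,d\nu$, with $\mu_{\varphi,I}:\equiv0$ if $\int\varphi_I\,d\mu=0$ (similarly for $\nu$). *)

From mathcomp Require Import all_boot all_order all_algebra.
From mathcomp Require Import all_classical all_reals all_analysis.
Import Order.TTheory GRing.Theory Num.Theory.

Set Implicit Arguments.
Unset Strict Implicit.
Unset Printing Implicit Defensive.

Local Open Scope classical_set_scope.
Local Open Scope ring_scope.

(* A bounded interval with endpoints a < b; l (resp. r) says whether the
   left (resp. right) endpoint is included. *)
Definition bitv (R : realType) (l r : bool) (a b : R) : set R :=
  [set` Interval (BSide l a) (BSide (~~ r) b)].

Definition Taff (R : realType) (a b : R) (x : R) : R := (x - a) / (b - a).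

(* phi(x) = dist(x, R \ (0,1)). *)
Definition phi (R : realType) (x : R) : R := Num.max 0 (Num.min x (1 - x)).

Definition radon (R : realType) (mu : {measure set R -> \bar R}) : Prop :=
  forall a b : R, (mu [set` `[a, b]] < +oo)%E.

Definition Lip1 (R : realType) : set (R -> R) :=
  [set psi | (forall x y : R, `|psi x - psi y| <= `|x - y|) /\
             (forall x : R, ~ (0 <= x <= 1) -> psi x = 0)].

(* The functional psi |-> int psi d( T_# (mu|_A) / c ), with the convention
   that it is 0 if c = 0. *)
Definition nint (R : realType) (mu : {measure set R -> \bar R}) (A : set R)
  (T : R -> R) (c : \bar R) (psi : R -> R) : \bar R :=
  if c == 0%E then 0%E
  else ((fine c)^-1%:E * \int[mu]_(x in A) (psi (T x))%:E)%E.

(* W_1 between two measures, given through their integral functionals. *)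
Definition W1 (R : realType) (F G : (R -> R) -> \bar R) : \bar R :=
  ereal_sup [set `|(F psi - G psi)%E|%E | psi in @Lip1 R].

Definition muI (R : realType) (mu : {measure set R -> \bar R})
  (l r : bool) (a b : R) : (R -> R) -> \bar R :=
  nint mu (bitv l r a b) (Taff a b) (mu (bitv l r a b)).

Definition intphiI (R : realType) (mu : {measure set R -> \bar R})
  (a b : R) : \bar R := (\int[mu]_x (phi (Taff a b x))%:E)%E.

Definition muphiI (R : realType) (mu : {measure set R -> \bar R})
  (l r : bool) (a b : R) : (R -> R) -> \bar R :=
  nint mu (bitv l r a b) (Taff a b) (intphiI mu a b).

Definition alpha (R : realType) (mu nu : {measure set R -> \bar R})
  (l r : bool) (a b : R) : \bar R :=
  W1 (muI mu l r a b) (muI nu l r a b).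

Definition alpha_s (R : realType) (mu nu : {measure set R -> \bar R})
  (l r : bool) (a b : R) : \bar R :=
  W1 (muphiI mu l r a b) (muphiI nu l r a b).

Definition doubling (R : realType) (nu : {measure set R -> \bar R}) (D : R) :=
  forall (x r : R), 0 < r ->
    (nu [set y : R | (`|x - y| < 2 * r)%R] <= D%:E * nu [set y : R | (`|x - y| < r)%R])%E.

From mathcomp Require Import all_boot all_order all_algebra.
From mathcomp Require Import all_classical all_reals all_analysis.
From mathcomp Require Import ring lra measurable_realfun.
Import Order.TTheory GRing.Theory Num.Theory.
Import numFieldNormedType.Exports.

Set Implicit Arguments.
Unset Strict Implicit.
Unset Printing Implicit Defensive.

Local Open Scope classical_set_scope.
Local Open Scope ring_scope.

(* Write X_m(psi) := int psi(T_I x) dm(x) and Y_m := X_m(phi).  Then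
   mu_{phi,I}(psi) = X_mu(psi) / Y_mu, and |X_m(psi)| <= Y_m since phi dominates
   every 1-Lipschitz function vanishing off (0,1).  For arbitrary normalisers c, c'
     X/Y - X'/Y' = c'/Y' * ((X/c - X'/c') + X/Y * (Y'/c' - Y/c)),
   so the difference of the phi-normalised functionals is at most c'/Y' times two
   differences of c-normalised ones.  With c = mu(I), c' = nu(I) these are bounded
   by alpha(I), which gives the second estimate.  For I inside J, psi o T_I o T_J^-1
   scaled by |I|/|J| is again a test function, and with c, c' the integrals of
   phi_J the differences are bounded by alpha_s(J); the remaining factor
   int phi_J dnu / int phi_I dnu is bounded by doubling, because phi_I >= 1/4 on a
   ball of radius comparable to |J| centred in I. *)

Section TestFunctions.
Variable R : realType.
Implicit Types (a b t x y : R) (psi : R -> R).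

Lemma phi_cases t :
  [\/ phi t = 0 /\ (t <= 0 \/ 1 <= t), phi t = t /\ 0 <= t <= 1/2
    | phi t = 1 - t /\ 1/2 <= t <= 1].
Proof.
rewrite /phi; case: (leP t (1 - t)) => h1.
  case: (leP 0 t) => h2; last by apply: Or31; split => //; left; lra.
  by apply: Or32; split => //; apply/andP; split; lra.
case: (leP 0 (1 - t)) => h2; last by apply: Or31; split => //; right; lra.
by apply: Or33; split => //; apply/andP; split; lra.
Qed.

Lemma phi_ge0 t : 0 <= phi t.
Proof. by case: (phi_cases t) => [[-> _]|[-> ?]|[-> ?]]; lra. Qed.

Lemma phi_le1 t : phi t <= 1.
Proof. by case: (phi_cases t) => [[-> _]|[-> ?]|[-> ?]]; lra. Qed.

Lemma phi_out t : t <= 0 \/ 1 <= t -> phi t = 0.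
Proof. by move=> h; case: (phi_cases t) => [[-> //]|[-> ?]|[-> ?]]; case: h; lra. Qed.

Lemma phi_Lip1 : Lip1 (@phi R).
Proof.
split=> [x y|x x01]; last first.
  apply: phi_out; case: (leP x 0) => x0; [by left|right].
  by rewrite leNgt; apply/negP => x1; apply: x01; apply/andP; split; lra.
have h1 : x - y <= `|x - y| by apply: ler_norm.
have h2 : y - x <= `|x - y| by rewrite distrC; apply: ler_norm.
rewrite ler_norml.
by case: (phi_cases x) => [[-> ?]|[-> ?]|[-> ?]];
  case: (phi_cases y) => [[-> ?]|[-> ?]|[-> ?]]; apply/andP; split; lra.
Qed.

Lemma Lip1_le_phi psi t : Lip1 psi -> `|psi t| <= phi t.
Proof.
move=> [psi_lip psi_out].
have [/andP[t0 t1]|t01] := boolP (0 <= t <= 1); last first.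
  by rewrite psi_out ?normr0 ?phi_ge0 // => h; rewrite h in t01.
have le_t : `|psi t| <= t.
  apply/ler_addgt0Pr => e e0; have := psi_lip t (- e).
  rewrite (psi_out (- e)); last by move=> /andP[h _]; lra.
  by rewrite subr0 opprK (ger0_norm (x := t + e)) //; lra.
have le_1t : `|psi t| <= 1 - t.
  apply/ler_addgt0Pr => e e0; have := psi_lip t (1 + e).
  rewrite (psi_out (1 + e)); last by move=> /andP[_ h]; lra.
  by rewrite subr0 (ler0_norm (x := t - (1 + e))); lra.
by case: (phi_cases t) => [[-> [?|?]]|[-> ?]|[-> ?]]; lra.
Qed.

Lemma Lip1_continuous psi : Lip1 psi -> continuous psi.
Proof.
move=> [psi_lip _] x; apply/cvgrPdist_lt => e e0.
by apply/nbhs_ballP; exists e => // y; apply: le_lt_trans (psi_lip x y).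
Qed.

Lemma Taff_dist a b x y : a < b ->
  `|Taff a b x - Taff a b y| = `|x - y| / (b - a).
Proof.
move=> ab; have ba_inv_gt0 : 0 < (b - a)^-1 by rewrite invr_gt0 subr_gt0.
by rewrite /Taff -mulrBl normrM (gtr0_norm ba_inv_gt0) opprB addrA subrK.
Qed.

Lemma Taff_continuous a b : continuous (Taff a b).
Proof.
move=> x; apply: cvgM; last exact: cvg_cst.
by apply: cvgB; [exact: cvg_id|exact: cvg_cst].
Qed.

Lemma Lip1_Taff_out a b psi x : a < b -> Lip1 psi -> ~ (a < x < b) ->
  psi (Taff a b x) = 0.
Proof.
move=> ab psi1 xab; apply/normr0_eq0/eqP; rewrite eq_le normr_ge0 andbT.
rewrite -(@phi_out (Taff a b x)) ?Lip1_le_phi // /Taff.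
case: (leP x a) => xa; first by left; rewrite pmulr_lle0 ?invr_gt0; lra.
case: (leP b x) => bx; first by right; rewrite ler_pdivlMr; lra.
by exfalso; apply: xab; apply/andP.
Qed.

Lemma bitv_inner l r a b x : a < x < b -> bitv l r a b x.
Proof.
move=> /andP[ax xb]; rewrite /bitv /= in_itv /=.
by case: l; case: r => /=; rewrite ?ax ?xb ?ltW.
Qed.

Lemma bitv_sub_itvcc l r a b : bitv l r a b `<=` [set` `[a, b]].
Proof.
move=> x; rewrite /bitv /= !in_itv /=.
by case: l; case: r => /= /andP[h1 h2]; rewrite ?h1 ?h2 ?ltW.
Qed.

Lemma bitv_subset_le lI rI lJ rJ (aI bI aJ bJ : R) : aI < bI ->
  bitv lI rI aI bI `<=` bitv lJ rJ aJ bJ -> aJ <= aI /\ bI <= bJ.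
Proof.
move=> abI IJ.
have inJ x : aI < x < bI -> aJ <= x <= bJ.
  move=> xI; have := bitv_sub_itvcc (IJ _ (bitv_inner lI rI xI)).
  by rewrite /= in_itv.
split; rewrite leNgt; apply/negP => lt.
  set m := Num.min aJ bI.
  have [maJ mbI] : m <= aJ /\ m <= bI by split; rewrite ge_min lexx ?orbT.
  have aIm : aI < m by rewrite lt_min lt abI.
  have /andP[] : aJ <= (aI + m) / 2 <= bJ by apply: inJ; apply/andP; split; lra.
  lra.
set m := Num.max aI bJ.
have [aIm bJm] : aI <= m /\ bJ <= m by split; rewrite le_max lexx ?orbT.
have mbI : m < bI by rewrite gt_max lt abI.
have /andP[] : aJ <= (m + bI) / 2 <= bJ by apply: inJ; apply/andP; split; lra.
lra.
Qed.

End TestFunctions.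

Arguments phi_Lip1 {R}.

Section IntegralBounds.
Context d (T : measurableType d) (R : realType).
Variable mu : {measure set T -> \bar R}.

Lemma integral_scaled_indic (B : set T) (k : R) : measurable B -> 0 <= k ->
  (\int[mu]_x (k * \1_B x)%:E = k%:E * mu B)%E.
Proof.
move=> mB k0; under eq_integral do rewrite EFinM.
rewrite ge0_integralZl_EFin //; first by rewrite integral_indic // setIT.
by apply/measurable_EFinP; exact: measurable_indic.
Qed.

Lemma Rintegral_le_measure (f : T -> R) (B : set T) (k : R) :
  measurable B -> 0 <= k -> mu.-integrable setT (EFin \o f) ->
  (forall x, 0 <= f x) -> (forall x, f x <= k) -> (forall x, ~ B x -> f x = 0) ->
  ((\int[mu]_x f x)%:E <= k%:E * mu B)%E.
Proof.
move=> mB k0 intf f0 fk fB; rewrite -integral_scaled_indic // fineK; last first.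
  exact: integrable_fin_num.
apply: (ge0_le_integral mu measurableT) => [x _|||x _]; rewrite ?lee_fin //.
- exact: measurable_int intf.
- by apply/measurable_EFinP; apply: measurable_funM => //; exact: measurable_indic.
rewrite indicE; have [/set_mem Bx|nBx] := boolP (x \in B); first by rewrite mulr1.
by rewrite mulr0 fB // => Bx; move/negP: nBx; apply; rewrite mem_set.
Qed.

Lemma measure_le_Rintegral (f : T -> R) (B : set T) (k : R) :
  measurable B -> 0 <= k -> mu.-integrable setT (EFin \o f) ->
  (forall x, 0 <= f x) -> (forall x, B x -> k <= f x) ->
  (k%:E * mu B <= (\int[mu]_x f x)%:E)%E.
Proof.
move=> mB k0 intf f0 Bf; rewrite -integral_scaled_indic // fineK; last first.
  exact: integrable_fin_num.
apply: (ge0_le_integral mu measurableT) => [x _|||x _]; rewrite ?lee_fin //.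
- by rewrite mulr_ge0.
- by apply/measurable_EFinP; apply: measurable_funM => //; exact: measurable_indic.
- exact: measurable_int intf.
rewrite indicE; have [/set_mem Bx|_] := boolP (x \in B); first by rewrite mulr1 Bf.
by rewrite mulr0.
Qed.

End IntegralBounds.

Section RadonIntegrals.
Variable R : realType.
Variable mu : {measure set R -> \bar R}.
Hypothesis mu_radon : radon mu.
Implicit Types (a b : R) (psi : R -> R).

Lemma radon_bitv_fin_num l r a b : mu (bitv l r a b) \is a fin_num.
Proof.
rewrite ge0_fin_numE //; apply: le_lt_trans (mu_radon a b).
apply: le_measure; rewrite ?inE; [exact: measurable_itv..|].
exact: bitv_sub_itvcc.
Qed.

Lemma integrable_Lip1_Taff a b psi : a < b -> Lip1 psi ->
  mu.-integrable setT (EFin \o (psi \o Taff a b)).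
Proof.
move=> ab psi1; have mab : measurable [set` `[a, b]] by exact: measurable_itv.
have psiT_cont : continuous (psi \o Taff a b).
  move=> x; apply: continuous_comp; first exact: Taff_continuous.
  exact: Lip1_continuous.
suff -> : EFin \o (psi \o Taff a b) = (EFin \o (psi \o Taff a b)) \_ [set` `[a, b]].
  apply/(integrable_mkcond _ mab)/measurable_bounded_integrable => //.
  - exact: measurable_funS (continuous_measurable_fun psiT_cont).
  - exists 1; split => // M M1 x _ /=; apply: le_trans (ltW M1).
    by apply: le_trans (Lip1_le_phi _ psi1) (phi_le1 _).
apply/funext => x; rewrite /patch; case: ifPn => // xab.
rewrite /= Lip1_Taff_out // => /andP[ax xb]; move: xab.
by rewrite mem_set //= in_itv /= !ltW.
Qed.

Lemma integral_Lip1_Taff a b psi : a < b -> Lip1 psi ->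
  (\int[mu]_x (psi (Taff a b x))%:E = (\int[mu]_x psi (Taff a b x))%:E)%E.
Proof.
move=> ab psi1; rewrite fineK //.
exact: integrable_fin_num (integrable_Lip1_Taff ab psi1).
Qed.

Lemma integral_bitv_Lip1_Taff l r a b psi : a < b -> Lip1 psi ->
  (\int[mu]_(x in bitv l r a b) (psi (Taff a b x))%:E =
   (\int[mu]_x psi (Taff a b x))%:E)%E.
Proof.
move=> ab psi1; rewrite -integral_Lip1_Taff // integral_mkcond.
apply: eq_integral => x _; rewrite /patch.
case: ifPn => // /negP xI; rewrite Lip1_Taff_out // => xab; apply: xI.
by rewrite mem_set //; exact: bitv_inner.
Qed.

Lemma norm_Rintegral_Lip1_Taff_le a b psi : a < b -> Lip1 psi ->
  `|\int[mu]_x psi (Taff a b x)| <= \int[mu]_x phi (Taff a b x).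
Proof.
move=> ab psi1; have intpsi := integrable_Lip1_Taff ab psi1.
apply: le_trans (le_normr_Rintegral measurableT intpsi) _.
apply: le_Rintegral => //.
- exact: integrable_norm intpsi.
- exact: integrable_Lip1_Taff ab phi_Lip1.
- by move=> x _ /=; exact: Lip1_le_phi.
Qed.

(* The convention mu_{phi,I} = 0 when int phi_I dmu = 0 is absorbed by x / 0 = 0. *)
Lemma muphiI_E l r a b psi : a < b -> Lip1 psi ->
  muphiI mu l r a b psi =
  ((\int[mu]_x psi (Taff a b x)) / \int[mu]_x phi (Taff a b x))%:E.
Proof.
move=> ab psi1; rewrite /muphiI /nint /intphiI.
rewrite integral_bitv_Lip1_Taff // (integral_Lip1_Taff ab phi_Lip1) eqe /=.
by case: ifPn => [/eqP->|_]; rewrite ?invr0 ?mulr0 // -EFinM mulrC.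
Qed.

Lemma muI_E l r a b psi : a < b -> Lip1 psi ->
  muI mu l r a b psi =
  ((\int[mu]_x psi (Taff a b x)) / fine (mu (bitv l r a b)))%:E.
Proof.
move=> ab psi1; rewrite /muI /nint integral_bitv_Lip1_Taff //.
rewrite -[in X in if X then _ else _](fineK (radon_bitv_fin_num l r a b)) eqe.
by case: ifPn => [/eqP->|_]; rewrite ?invr0 ?mulr0 // -EFinM mulrC.
Qed.

End RadonIntegrals.

Section RatioBounds.
Variable R : realFieldType.

Lemma ratio_le1 (X Y : R) : `|X| <= Y -> `|X / Y| <= 1.
Proof.
move=> XY; have [->|Y0] := eqVneq Y 0; first by rewrite invr0 mulr0 normr0.
have Ygt0 : 0 < Y by rewrite lt_def Y0 (le_trans (normr_ge0 _) XY).
by rewrite normf_div (gtr0_norm Ygt0) ler_pdivrMr // mul1r.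
Qed.

(* No condition on c or Y is needed: with x / 0 = 0 the identity behind the bound
   survives c = 0, and Y = 0 forces X = 0. *)
Lemma ratio_sub_le (X Y c X' Y' c' : R) : `|X| <= Y -> 0 < Y' -> 0 < c' ->
  `|X / Y - X' / Y'| <= c' / Y' * (`|X / c - X' / c'| + `|Y / c - Y' / c'|).
Proof.
move=> XY Y'gt0 c'gt0.
have XYE : X / Y - X' / Y' =
    c' / Y' * ((X / c - X' / c') + X / Y * (Y' / c' - Y / c)).
  have [Y0|Y0] := eqVneq Y 0.
    have X0 : X = 0 by move: XY; rewrite Y0 normr_le0 => /eqP.
    by rewrite X0 Y0 !mul0r addr0; field; rewrite !gt_eqF.
  have [->|c0] := eqVneq c 0; last by field; rewrite c0 Y0 !gt_eqF.
  by rewrite invr0 !mulr0 subr0 sub0r; field; rewrite Y0 !gt_eqF.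
have ratio_ge0 : 0 <= c' / Y' by rewrite divr_ge0 ?ltW.
rewrite XYE normrM (ger0_norm ratio_ge0); apply: ler_wpM2l => //.
apply: le_trans (ler_normD _ _) _; rewrite lerD2l normrM distrC.
by rewrite -[leRHS]mul1r ler_wpM2r // ratio_le1.
Qed.

Lemma ratio_sub_le_comparable (X Y c X' Y' c' K e : R) :
  `|X| <= Y -> Y <= c -> `|X'| <= Y' -> Y' <= c' -> c' <= K * Y' -> 1 <= K ->
  `|X / c - X' / c'| <= e -> `|Y / c - Y' / c'| <= e -> `|c / c - c' / c'| <= e ->
  `|X / Y - X' / Y'| <= 2 * K * e.
Proof.
move=> XY Yc X'Y' Y'c' c'K K1 eX eY ec.
have e0 : 0 <= e := le_trans (normr_ge0 _) eX.
have Y'0 : 0 <= Y' := le_trans (normr_ge0 _) X'Y'.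
have [Y'eq0|Y'neq0] := eqVneq Y' 0; last first.
  have Y'gt0 : 0 < Y' by rewrite lt_def Y'neq0.
  have c'gt0 : 0 < c' := lt_le_trans Y'gt0 Y'c'.
  have ratio_le : c' / Y' <= K by rewrite ler_pdivrMr.
  have sum_le : `|X / c - X' / c'| + `|Y / c - Y' / c'| <= 2 * e by lra.
  apply: le_trans (ratio_sub_le c _ XY Y'gt0 c'gt0) _.
  rewrite (_ : 2 * K * e = K * (2 * e)); last by ring.
  apply: ler_pM ratio_le sum_le; last by rewrite addr_ge0.
  by rewrite divr_ge0 // ltW.
have X'0 : X' = 0 by move: X'Y'; rewrite Y'eq0 normr_le0 => /eqP.
have c'0 : c' = 0 by apply/le_anti; rewrite -{2}Y'eq0 Y'c' andbT -(mulr0 K) -Y'eq0.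
rewrite X'0 Y'eq0 mul0r subr0.
have [c0|c0] := eqVneq c 0.
  have -> : Y = 0 by apply/le_anti; rewrite -{1}c0 Yc (le_trans (normr_ge0 _) XY).
  by rewrite invr0 mulr0 normr0 mulr_ge0 // mulr_ge0 //; lra.
move: ec; rewrite c'0 mul0r subr0 divff // normr1 => e1.
by apply: le_trans (ratio_le1 XY) _; nra.
Qed.

End RatioBounds.

Section AlphaBounds.
Variable R : realType.
Variables mu nu : {measure set R -> \bar R}.
Hypotheses (mu_radon : radon mu) (nu_radon : radon nu).
Variables (l r : bool) (a b : R).
Hypothesis ab : a < b.

Lemma W1_ub (F G : (R -> R) -> \bar R) psi : Lip1 psi ->
  (`|F psi - G psi| <= W1 F G)%E.
Proof. by move=> psi1; apply: ereal_sup_ubound; exists psi. Qed.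

Lemma alpha_s_ub psi : Lip1 psi ->
  (`|(\int[mu]_x psi (Taff a b x)) / \int[mu]_x phi (Taff a b x) -
     (\int[nu]_x psi (Taff a b x)) / \int[nu]_x phi (Taff a b x)|%:E
   <= alpha_s mu nu l r a b)%E.
Proof.
move=> psi1; have := W1_ub (muphiI mu l r a b) (muphiI nu l r a b) psi1.
by rewrite !muphiI_E // -EFinB abse_EFin.
Qed.

Lemma alpha_ub psi : Lip1 psi ->
  (`|(\int[mu]_x psi (Taff a b x)) / fine (mu (bitv l r a b)) -
     (\int[nu]_x psi (Taff a b x)) / fine (nu (bitv l r a b))|%:E
   <= alpha mu nu l r a b)%E.
Proof.
move=> psi1; have := W1_ub (muI mu l r a b) (muI nu l r a b) psi1.
by rewrite !muI_E // -EFinB abse_EFin.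
Qed.

Lemma alpha_s_le2 : (alpha_s mu nu l r a b <= 2%:E)%E.
Proof.
apply: ub_ereal_sup => _ [psi psi1 <-]; rewrite !muphiI_E // -EFinB abse_EFin lee_fin.
apply: le_trans (ler_normB _ _) _; rewrite [2]/(1 + 1).
by apply: lerD; apply: ratio_le1; exact: norm_Rintegral_Lip1_Taff_le.
Qed.

Lemma alpha_s_le_alpha :
  (0 < nu (bitv l r a b))%E -> (0 < muI nu l r a b (@phi R))%E ->
  (alpha_s mu nu l r a b <=
     (2 / fine (muI nu l r a b (@phi R)))%:E * alpha mu nu l r a b)%E.
Proof.
rewrite (muI_E nu_radon l r ab phi_Lip1).
rewrite -(fineK (radon_bitv_fin_num nu_radon l r a b)) !lte_fin /=.
set sn := fine _; set Yn := \int[nu]_x phi (Taff a b x) => sn_gt0 ratio_gt0.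
have Yn_gt0 : 0 < Yn by have := mulr_gt0 ratio_gt0 sn_gt0; rewrite divfK ?gt_eqF.
apply: ub_ereal_sup => _ [psi psi1 <-]; rewrite !muphiI_E // -EFinB abse_EFin.
have XY := norm_Rintegral_Lip1_Taff_le mu_radon ab psi1.
have := ratio_sub_le (fine (mu (bitv l r a b))) (\int[nu]_x psi (Taff a b x))
  XY Yn_gt0 sn_gt0.
rewrite -lee_fin => /le_trans; apply.
rewrite (_ : 2 / (Yn / sn) = sn / Yn * 2); last by field; rewrite !gt_eqF.
have ratio_ge0 : 0 <= sn / Yn by rewrite divr_ge0 // ltW.
rewrite [in leRHS]EFinM -muleA [in leLHS]EFinM lee_wpmul2l ?lee_fin //.
by rewrite EFinD mule_natl mule2n leeD // (alpha_ub psi1, alpha_ub phi_Lip1).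
Qed.

Lemma alpha_s_fin_num : alpha_s mu nu l r a b \is a fin_num.
Proof.
rewrite ge0_fin_numE; first exact: le_lt_trans alpha_s_le2 (ltry _).
exact: le_trans (alpha_s_ub phi_Lip1).
Qed.

Lemma alpha_s_ub_fine psi : Lip1 psi ->
  `|(\int[mu]_x psi (Taff a b x)) / \int[mu]_x phi (Taff a b x) -
    (\int[nu]_x psi (Taff a b x)) / \int[nu]_x phi (Taff a b x)|
  <= fine (alpha_s mu nu l r a b).
Proof. by move=> psi1; rewrite -lee_fin fineK ?alpha_s_fin_num ?alpha_s_ub. Qed.

End AlphaBounds.

Section Transfer.
Variable R : realType.
Variables aI bI aJ bJ : R.

Definition transfer (psi : R -> R) (y : R) : R :=
  (bI - aI) / (bJ - aJ) * psi (Taff aI bI (aJ + y * (bJ - aJ))).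

Lemma transfer_Taff psi x : aJ < bJ ->
  transfer psi (Taff aJ bJ x) = (bI - aI) / (bJ - aJ) * psi (Taff aI bI x).
Proof.
by move=> abJ; rewrite /transfer /Taff divfK ?subrKC // subr_eq0 gt_eqF.
Qed.

Lemma Lip1_transfer psi : aI < bI -> aJ < bJ -> aJ <= aI -> bI <= bJ ->
  Lip1 psi -> Lip1 (transfer psi).
Proof.
move=> abI abJ aJI bIJ [psi_lip psi_out]; have dI : 0 < bI - aI by lra.
have dJ : 0 < bJ - aJ by lra.
split=> [y1 y2|y y01].
  have rho_ge0 : 0 <= (bI - aI) / (bJ - aJ) by rewrite divr_ge0 // ltW.
  rewrite /transfer -mulrBr normrM (ger0_norm rho_ge0).
  apply: le_trans (ler_wpM2l rho_ge0 (psi_lip _ _)) _.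
  rewrite Taff_dist // (_ : aJ + y1 * (bJ - aJ) - (aJ + y2 * (bJ - aJ)) =
    (y1 - y2) * (bJ - aJ)); last by ring.
  rewrite normrM (gtr0_norm dJ) [leLHS](_ : _ = `|y1 - y2|) //.
  by field; rewrite !gt_eqF.
rewrite /transfer psi_out ?mulr0 // /Taff => /andP[].
rewrite ler_pdivlMr // ler_pdivrMr // mul0r mul1r => h0 h1.
have [y_lt0|y_gt1] : y < 0 \/ 1 < y.
  case: (ltP y 0) => [|y_ge0]; [by left|right].
  by rewrite ltNge; apply/negP => y_le1; apply: y01; apply/andP.
- have : y * (bJ - aJ) < 0 by rewrite pmulr_llt0.
  lra.
- have : bJ - aJ < y * (bJ - aJ) by rewrite ltr_pMl.
  lra.
Qed.

Lemma transfer_phi_le x : aI < bI -> aJ < bJ -> aJ <= aI -> bI <= bJ ->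
  transfer (@phi R) (Taff aJ bJ x) <= phi (Taff aJ bJ x).
Proof.
move=> abI abJ aJI bIJ; rewrite transfer_Taff //; have dI : 0 < bI - aI by lra.
have dJ : 0 < bJ - aJ by lra.
set rho := (bI - aI) / (bJ - aJ); have rho_gt0 : 0 < rho by exact: divr_gt0.
set tI := Taff aI bI x; set tJ := Taff aJ bJ x.
have left_le : rho * tI <= tJ.
  have -> : rho * tI = (x - aI) / (bJ - aJ).
    by rewrite /rho /tI /Taff; field; rewrite !gt_eqF.
  by rewrite /tJ /Taff ler_pM2r ?invr_gt0 //; lra.
have right_le : rho * (1 - tI) <= 1 - tJ.
  have -> : rho * (1 - tI) = (bI - x) / (bJ - aJ).
    by rewrite /rho /tI /Taff; field; rewrite !gt_eqF.
  have -> : 1 - tJ = (bJ - x) / (bJ - aJ) by rewrite /tJ /Taff; field; rewrite gt_eqF.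
  by rewrite ler_pM2r ?invr_gt0 //; lra.
case: (phi_cases tI) => [[-> _]|[-> ?]|[-> ?]]; first by rewrite mulr0 phi_ge0.
- have : rho * tI <= rho * (1 - tI) by rewrite ler_pM2l //; lra.
  by case: (phi_cases tJ) => [[-> [?|?]]|[-> ?]|[-> ?]]; lra.
- have : rho * (1 - tI) <= rho * tI by rewrite ler_pM2l //; lra.
  by case: (phi_cases tJ) => [[-> [?|?]]|[-> ?]|[-> ?]]; lra.
Qed.

Lemma Rintegral_transfer (mu : {measure set R -> \bar R}) psi :
  radon mu -> aI < bI -> aJ < bJ -> Lip1 psi ->
  \int[mu]_x transfer psi (Taff aJ bJ x) =
  (bI - aI) / (bJ - aJ) * \int[mu]_x psi (Taff aI bI x).
Proof.
move=> mu_radon abI abJ psi1; under eq_Rintegral do rewrite transfer_Taff //.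
exact: RintegralZl measurableT (integrable_Lip1_Taff mu_radon abI psi1).
Qed.

Lemma norm_Rintegral_transfer_le (mu : {measure set R -> \bar R}) psi :
  radon mu -> aI < bI -> aJ < bJ -> Lip1 psi ->
  `|\int[mu]_x transfer psi (Taff aJ bJ x)| <=
  \int[mu]_x transfer (@phi R) (Taff aJ bJ x).
Proof.
move=> mu_radon abI abJ psi1; have rho_ge0 : 0 <= (bI - aI) / (bJ - aJ).
  by rewrite divr_ge0 // subr_ge0 ltW.
rewrite (Rintegral_transfer mu_radon abI abJ psi1).
rewrite (Rintegral_transfer mu_radon abI abJ phi_Lip1) normrM (ger0_norm rho_ge0).
by apply: (ler_wpM2l rho_ge0); exact: norm_Rintegral_Lip1_Taff_le.
Qed.

Lemma Rintegral_transfer_phi_le (mu : {measure set R -> \bar R}) :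
  radon mu -> aI < bI -> aJ < bJ -> aJ <= aI -> bI <= bJ ->
  \int[mu]_x transfer (@phi R) (Taff aJ bJ x) <= \int[mu]_x phi (Taff aJ bJ x).
Proof.
move=> mu_radon abI abJ aJI bIJ; apply: le_Rintegral => //.
- exact (integrable_Lip1_Taff mu_radon abJ (Lip1_transfer abI abJ aJI bIJ phi_Lip1)).
- exact (integrable_Lip1_Taff mu_radon abJ phi_Lip1).
- by move=> x _; exact: transfer_phi_le.
Qed.

End Transfer.

Section Doubling.
Variable R : realType.
Variable nu : {measure set R -> \bar R}.
Implicit Types (D a b m x r : R).

Lemma doubling_ball D : doubling nu D ->
  forall x r, 0 < r -> (nu (ball x (2 * r)) <= D%:E * nu (ball x r))%E.
Proof. by move=> nuD x r r_gt0; rewrite -!ball_normE; exact: nuD. Qed.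

Lemma doublingW D D' : D <= D' -> doubling nu D -> doubling nu D'.
Proof.
move=> DD' nuD x r r_gt0; apply: le_trans (nuD x r r_gt0) _.
by apply: lee_wpmul2r; rewrite ?lee_fin.
Qed.

Lemma doubling_iter D : 0 <= D -> doubling nu D ->
  forall k x r, 0 < r -> (nu (ball x (2 ^+ k * r)) <= (D ^+ k)%:E * nu (ball x r))%E.
Proof.
move=> D_ge0 nuD; elim=> [|k IHk] x r r_gt0; first by rewrite expr0 mul1r mul1e.
rewrite exprS -mulrA exprS EFinM -muleA.
apply: le_trans (doubling_ball nuD _ _) _; first by rewrite mulr_gt0 ?exprn_gt0.
by apply: lee_wpmul2l; [rewrite lee_fin|exact: IHk].
Qed.

Lemma phi_Taff_out_ball a b m x : a < b -> a <= m <= b -> ~ ball m (b - a) x ->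
  phi (Taff a b x) = 0.
Proof.
move=> ab /andP[am mb] xB; rewrite Lip1_Taff_out //; first exact: phi_Lip1.
move=> /andP[ax xb]; apply: xB; rewrite -ball_normE /= ltr_distlC.
by apply/andP; split; lra.
Qed.

Lemma phi_Taff_ge_quarter a b x : a < b -> ball ((a + b) / 2) ((b - a) / 4) x ->
  1 / 4 <= phi (Taff a b x).
Proof.
move=> ab; rewrite -ball_normE /= ltr_distlC => /andP[x_gt x_lt].
have t_ge : 1 / 4 <= Taff a b x by rewrite /Taff ler_pdivlMr; lra.
have t_le : Taff a b x <= 3 / 4 by rewrite /Taff ler_pdivrMr; lra.
by case: (phi_cases (Taff a b x)) => [[-> [?|?]]|[-> ?]|[-> ?]]; lra.
Qed.

(* Around the midpoint m of I, phi_J vanishes off the ball of radius |J| while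
   phi_I >= 1/4 on the ball of radius theta |J| / 4; k doublings compare them. *)
Lemma Rintegral_phi_Taff_doubling (D theta : R) (k : nat) (aI bI aJ bJ : R) :
  radon nu -> doubling nu D -> 0 <= D -> 0 < theta -> 4 <= 2 ^+ k * theta ->
  aI < bI -> aJ <= aI -> bI <= bJ -> theta * (bJ - aJ) <= bI - aI ->
  \int[nu]_x phi (Taff aJ bJ x) <= 4 * D ^+ k * \int[nu]_x phi (Taff aI bI x).
Proof.
move=> nu_radon nuD D_ge0 theta_gt0 k_large abI aJI bIJ thetaJI.
have abJ : aJ < bJ by lra.
set m := (aI + bI) / 2; set r0 := theta * (bJ - aJ) / 4.
have r0_gt0 : 0 < r0 by rewrite divr_gt0 // mulr_gt0 // subr_gt0.
have J_ball : ((\int[nu]_x phi (Taff aJ bJ x))%:E <= nu (ball m (bJ - aJ)))%E.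
  rewrite -[leRHS]mul1e; apply: Rintegral_le_measure => //.
  - exact: measurable_ball.
  - exact (integrable_Lip1_Taff nu_radon abJ phi_Lip1).
  - by move=> x; exact: phi_ge0.
  - by move=> x; exact: phi_le1.
  - by move=> x; apply: phi_Taff_out_ball => //; apply/andP; split; rewrite /m; lra.
have balls : (nu (ball m (bJ - aJ)) <= (D ^+ k)%:E * nu (ball m r0))%E.
  apply: le_trans (doubling_iter D_ge0 nuD k m r0_gt0).
  apply: le_measure; rewrite ?inE; [exact: measurable_ball..|apply: le_ball].
  by rewrite /r0 mulrA ler_pdivlMr //; nra.
have small_ball :
    ((1 / 4)%:E * nu (ball m r0) <= (\int[nu]_x phi (Taff aI bI x))%:E)%E.
  apply: measure_le_Rintegral => //.
  - exact: measurable_ball.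
  - exact (integrable_Lip1_Taff nu_radon abI phi_Lip1).
  - by move=> x; exact: phi_ge0.
  - move=> x x_r0; apply: phi_Taff_ge_quarter => //; apply: le_ball x_r0.
    by rewrite /r0 ler_pM2r //; lra.
rewrite -lee_fin (mulrC 4) !EFinM -muleA; apply: le_trans J_ball _.
apply: le_trans balls _; apply: lee_wpmul2l; first by rewrite lee_fin exprn_ge0.
have -> : nu (ball m r0) = (4%:E * ((1 / 4)%:E * nu (ball m r0)))%E.
  by rewrite muleA -EFinM (_ : 4 * (1 / 4) = 1) ?mul1e //; field.
by apply: lee_wpmul2l; rewrite ?lee_fin.
Qed.

End Doubling.

Lemma alpha_s_subinterval_le (R : realType) (mu nu : {measure set R -> \bar R})
    (D theta : R) (k : nat) (lI rI lJ rJ : bool) (aI bI aJ bJ : R) :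
  radon mu -> radon nu -> doubling nu D -> 1 <= D ->
  0 < theta -> 4 <= 2 ^+ k * theta ->
  aI < bI -> aJ < bJ -> bitv lI rI aI bI `<=` bitv lJ rJ aJ bJ ->
  theta * (bJ - aJ) <= bI - aI ->
  (alpha_s mu nu lI rI aI bI <=
     (2 * (4 * D ^+ k / theta))%:E * alpha_s mu nu lJ rJ aJ bJ)%E.
Proof.
move=> mu_radon nu_radon nuD D_ge1 theta_gt0 k_large abI abJ IJ thetaJI.
have [aJI bIJ] := bitv_subset_le abI IJ.
have phi1 := @phi_Lip1 R.
set rho := (bI - aI) / (bJ - aJ); set K := 4 * D ^+ k / theta.
have rho_gt0 : 0 < rho by rewrite divr_gt0 // subr_gt0.
have theta_le_rho : theta <= rho by rewrite ler_pdivlMr // subr_gt0.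
have rho_le1 : rho <= 1 by rewrite ler_pdivrMr ?subr_gt0 // mul1r; lra.
have Dk_ge1 := exprn_ege1 k D_ge1.
have K_ge1 : 1 <= K by rewrite ler_pdivlMr // mul1r; lra.
have tr m psi : radon m -> Lip1 psi ->
    \int[m]_x transfer aI bI aJ bJ psi (Taff aJ bJ x) =
    rho * \int[m]_x psi (Taff aI bI x).
  by move=> m_radon psi1; exact: Rintegral_transfer.
have phiJ_le : \int[nu]_x phi (Taff aJ bJ x) <=
    K * \int[nu]_x transfer aI bI aJ bJ (@phi R) (Taff aJ bJ x).
  have D_ge0 : 0 <= D by lra.
  rewrite (tr _ _ nu_radon phi1).
  apply: le_trans (Rintegral_phi_Taff_doubling nu_radon nuD D_ge0 theta_gt0 k_large
    abI aJI bIJ thetaJI) _.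
  have phiI_ge0 : 0 <= \int[nu]_x phi (Taff aI bI x).
    by apply: Rintegral_ge0 => x _; exact: phi_ge0.
  rewrite mulrA; apply: (ler_wpM2r phiI_ge0).
  rewrite /K mulrAC ler_pdivlMr //; apply: (ler_wpM2l _ theta_le_rho).
  by rewrite mulr_ge0 // exprn_ge0.
have scale x y : x / y = (rho * x) / (rho * y).
  by rewrite invfM mulrACA mulfV ?gt_eqF // mul1r.
apply: ub_ereal_sup => _ [psi psi1 <-]; rewrite !muphiI_E //.
rewrite -EFinB abse_EFin -(fineK (alpha_s_fin_num _ _ _ _ abJ)) // -EFinM lee_fin.
rewrite (scale (\int[mu]_x psi _)) (scale (\int[nu]_x psi _)) -!tr //.
apply: (ratio_sub_le_comparable _ _ _ _ phiJ_le K_ge1).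
- exact: norm_Rintegral_transfer_le.
- exact: Rintegral_transfer_phi_le.
- exact: norm_Rintegral_transfer_le.
- exact: Rintegral_transfer_phi_le.
all: apply: (alpha_s_ub_fine mu_radon nu_radon lJ rJ abJ) => //.
all: exact: Lip1_transfer.
Qed.

Theorem mainTheorem9 (R : realType) :
  (forall (mu nu : {measure set R -> \bar R}), radon mu -> radon nu ->
   forall (l r : bool) (a b : R), a < b ->
     (alpha_s mu nu l r a b <= 2%:E)%E /\
     ((0 < nu (bitv l r a b))%E -> (0 < muI nu l r a b (@phi R))%E ->
      (alpha_s mu nu l r a b <=
         (2 / fine (muI nu l r a b (@phi R)))%:E * alpha mu nu l r a b)%E)) /\
  (forall (D theta : R), 0 < theta ->
   exists C : R, forall (mu nu : {measure set R -> \bar R}),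
     radon mu -> radon nu -> doubling nu D ->
     forall (lI rI lJ rJ : bool) (aI bI aJ bJ : R),
       aI < bI -> aJ < bJ ->
       bitv lI rI aI bI `<=` bitv lJ rJ aJ bJ ->
       theta * (bJ - aJ) <= bI - aI ->
       (alpha_s mu nu lI rI aI bI <= C%:E * alpha_s mu nu lJ rJ aJ bJ)%E).
Proof.
split=> [mu nu mu_radon nu_radon l r a b ab|D theta theta_gt0].
  by split; [exact: alpha_s_le2|exact: alpha_s_le_alpha].
have [k k_large] : exists k : nat, 4 <= 2 ^+ k * theta.
  exists (Num.truncn (4 / theta)).+1; rewrite -ler_pdivrMr //.
  apply: le_trans (ltW (truncnS_gt _)) _.
  by rewrite -natrX ler_nat; apply/ltnW/ltn_expl.
set D' := Num.max D 1.
exists (2 * (4 * D' ^+ k / theta)) => mu nu mu_radon nu_radon nuD *.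
apply: alpha_s_subinterval_le => //; last by rewrite le_max lexx orbT.
by apply: doublingW nuD; rewrite le_max lexx.
Qed.
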